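(* Let $\mathcal{A}=\{1,\dots,N\}$, $\boldsymbol{\lambda}\in\mathbb{R}_+^N$, $\boldsymbol{\delta}\in\mathbb{R}^N$ with $\delta_i>0$, $B\in\mathbb{R}_+^{N\times N}$ with zero diagonal whose associated directed graph is weakly connected but not strongly connected, $\mathcal{S}\subset\mathbb{R}_+^N$ convex, and $q_i:\mathbb{R}_+\to(0,1]$ decreasing, strictly convex, continuously differentiable. For $\epsilon>0$ and $\mathbf{s}\in\mathcal{S}$ let $\bar{\mathbf{p}}^\epsilon(\mathbf{s})>\mathbf{0}$ be the unique strictly positive solution of $(\mathbf{1}-\mathbf{p})\circ(\boldsymbol{\lambda}+\epsilon\mathbf{1}+B\mathbf{p})-\mathbf{q}(\mathbf{s})^{-1}\circ\boldsymbol{\delta}\circ\mathbf{p}=\mathbf{0}$. Then for each $\mathbf{s}\in\mathcal{S}$, $\bar{\mathbf{p}}^\epsilon(\mathbf{s})$ is increasing in $\epsilon>0$.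
   Context: $\circ$ is the element-wise product; $\mathbf{q}(\mathbf{s})=(q_i(s_i))_i$ and $\mathbf{q}(\mathbf{s})^{-1}$ is its element-wise inverse. The associated graph has an edge $(j,i)$ iff $b_{i,j}>0$. Vectors are ordered componentwise. *)

From HB Require Import structures.
From mathcomp Require Import all_boot all_order all_algebra.
From mathcomp Require Import all_classical all_reals all_analysis.
Set Implicit Arguments. Unset Strict Implicit. Unset Printing Implicit Defensive.
Import Order.TTheory GRing.Theory Num.Theory.
Import numFieldNormedType.Exports.
Local Open Scope classical_set_scope.
Local Open Scope ring_scope.

Section Defs.
Variable R : realType.
Variable N : nat.

(* Edge (j,i) of the graph associated with B iff b_{i,j} > 0. *)
Definition edgeB (B : 'M[R]_N) : rel 'I_N := fun j i => 0 < B i j.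

Definition strongly_connected (B : 'M[R]_N) : Prop :=
  forall i j : 'I_N, connect (edgeB B) i j.

Definition weakly_connected (B : 'M[R]_N) : Prop :=
  forall i j : 'I_N,
    connect (fun x y => edgeB B x y || edgeB B y x) i j.

Definition mxvec_app (B : 'M[R]_N) (p : 'I_N -> R) (i : 'I_N) : R :=
  \sum_(j < N) B i j * p j.

Definition convex_setS (S : ('I_N -> R) -> Prop) : Prop :=
  forall x y, S x -> S y -> forall t : R, 0 <= t -> t <= 1 ->
    S (fun i => t * x i + (1 - t) * y i).

Definition solves_eq (lam delta : 'I_N -> R) (B : 'M[R]_N)
  (q : 'I_N -> R -> R) (eps : R) (s p : 'I_N -> R) : Prop :=
  forall i : 'I_N,
    (1 - p i) * (lam i + eps + mxvec_app B p i) - (q i (s i))^-1 * delta i * p i = 0.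

Definition vpos (p : 'I_N -> R) : Prop := forall i, 0 < p i.

Definition good_q (q : R -> R) : Prop :=
  [/\ (forall x, 0 <= x -> 0 < q x /\ q x <= 1),
      (forall x y, 0 <= x -> x <= y -> q y <= q x),
      (forall x y t, 0 <= x -> 0 <= y -> x != y -> 0 < t -> t < 1 ->
          q (t * x + (1 - t) * y) < t * q x + (1 - t) * q y)
    & {within [set x : R | 0 <= x], continuous q} /\
      exists dq : R -> R, {within [set x : R | 0 <= x], continuous dq} /\
        forall x : R, 0 < x -> is_derive x (1:R) q (dq x)].
End Defs.

From HB Require Import structures.
From mathcomp Require Import all_boot all_order all_algebra.
From mathcomp Require Import all_classical all_reals all_analysis.
From mathcomp Require Import ring lra.
Set Implicit Arguments. Unset Strict Implicit. Unset Printing Implicit Defensive.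
Import Order.TTheory GRing.Theory Num.Theory.
Local Open Scope ring_scope.

(* Writing the equation as (1 - p) o (a + B p) = c o p with a = lam + eps 1 and
   c = q(s)^-1 o delta, compare two positive solutions p1, p2 for a1 <= a2 at an
   index m maximising p1 / p2.  If t := p1 m / p2 m were > 1, then p1 <= t p2
   gives (B p1)_m <= t (B p2)_m, and the equation for p1 at m would force
   c_m t p2_m <= (1 - t p2_m)(a2_m + t (B p2)_m), which falls short of
   t (1 - p2_m)(a2_m + (B p2)_m) = c_m t p2_m by (t - 1)(a2_m + t p2_m (B p2)_m) > 0. *)

Lemma balance_lt1 (R : realFieldType) (x a c : R) :
  0 < x -> 0 < c -> 0 <= a -> (1 - x) * a = c * x -> x < 1.
Proof. by move=> *; rewrite ltNge; apply/negP => ?; nra. Qed.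

Lemma balance_ratio_le1 (R : realFieldType) (t y c a1 a2 b1 b2 : R) :
  0 < y -> 0 < c -> 0 < a2 -> 0 <= b2 -> a1 <= a2 -> b1 <= t * b2 ->
  0 < 1 - t * y ->
  (1 - t * y) * (a1 + b1) = c * (t * y) -> (1 - y) * (a2 + b2) = c * y ->
  t <= 1.
Proof.
move=> y_gt0 c_gt0 a2_gt0 b2_ge0 le_a le_b ty_lt1 E1 E2.
rewrite leNgt; apply/negP => t_gt1.
have lower : c * (t * y) <= (1 - t * y) * (a2 + t * b2).
  by rewrite -E1 ler_wpM2l ?lerD // ltW.
have gap : c * (t * y) - (1 - t * y) * (a2 + t * b2) =
           (t - 1) * (a2 + t * y * b2).
  by rewrite mulrCA -E2; ring.
have : 0 < (t - 1) * (a2 + t * y * b2).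
  rewrite mulr_gt0 ?subr_gt0 // ltr_wpDr // !mulr_ge0 // ltW //.
  exact: lt_trans t_gt1.
by rewrite -gap subr_gt0 ltNge lower.
Qed.

Section Balance.
Variables (R : realType) (N : nat) (B : 'M[R]_N).
Hypothesis B_ge0 : forall i j, 0 <= B i j.

Definition balanced (a c p : 'I_N -> R) : Prop :=
  forall i, (1 - p i) * (a i + mxvec_app B p i) = c i * p i.

Lemma mxvec_app_ge0 (p : 'I_N -> R) i :
  (forall j, 0 <= p j) -> 0 <= mxvec_app B p i.
Proof. by move=> p_ge0; apply: sumr_ge0 => j _; rewrite mulr_ge0. Qed.

Lemma mxvec_app_le_scale (t : R) (p p' : 'I_N -> R) i :
  (forall j, p j <= t * p' j) -> mxvec_app B p i <= t * mxvec_app B p' i.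
Proof.
move=> le_p; rewrite /mxvec_app mulr_sumr; apply: ler_sum => j _.
by rewrite mulrCA ler_wpM2l.
Qed.

Lemma balanced_lt1 (a c p : 'I_N -> R) i :
  (forall j, 0 <= a j) -> 0 < c i -> vpos p -> balanced a c p -> p i < 1.
Proof.
move=> a_ge0 c_gt0 p_gt0 bal; apply: balance_lt1 (bal i) => //.
by rewrite addr_ge0 // mxvec_app_ge0 // => j; rewrite ltW.
Qed.

Lemma balanced_monotone (a1 a2 c p1 p2 : 'I_N -> R) :
  (forall i, 0 <= a1 i) -> (forall i, a1 i <= a2 i) -> (forall i, 0 < a2 i) ->
  (forall i, 0 < c i) -> vpos p1 -> vpos p2 ->
  balanced a1 c p1 -> balanced a2 c p2 ->
  forall i, p1 i <= p2 i.
Proof.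
move=> a1_ge0 le_a a2_gt0 c_gt0 p1_gt0 p2_gt0 bal1 bal2 i.
have [m _ max_m] := @arg_maxP _ _ _ i xpredT (fun k => p1 k / p2 k) isT.
set t := p1 m / p2 m in max_m.
have le_p k : p1 k <= t * p2 k by rewrite -ler_pdivrMr //; exact: max_m.
suff t_le1 : t <= 1 by rewrite (le_trans (le_p i)) // ler_piMl // ltW.
have p1m : p1 m = t * p2 m by rewrite /t divfK // gt_eqF.
apply: (@balance_ratio_le1 _ t (p2 m) (c m) (a1 m) (a2 m)
          (mxvec_app B p1 m) (mxvec_app B p2 m)) => //.
- by rewrite mxvec_app_ge0 // => j; rewrite ltW.
- exact: mxvec_app_le_scale.
- by rewrite -p1m subr_gt0 (balanced_lt1 a1_ge0 _ p1_gt0 bal1).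
- by rewrite -p1m.
Qed.

End Balance.

Lemma solves_eq_balanced (R : realType) (N : nat) (lam delta : 'I_N -> R)
    (B : 'M[R]_N) (q : 'I_N -> R -> R) (eps : R) (s p : 'I_N -> R) :
  solves_eq lam delta B q eps s p ->
  balanced B (fun i => lam i + eps) (fun i => (q i (s i))^-1 * delta i) p.
Proof. by move=> sol i; apply/eqP; rewrite -subr_eq0 sol. Qed.

Theorem proposition4 (R : realType) (N : nat)
  (lam delta : 'I_N -> R) (B : 'M[R]_N)
  (S : ('I_N -> R) -> Prop) (q : 'I_N -> R -> R)
  (pbar : R -> ('I_N -> R) -> ('I_N -> R))
  (hlam : forall i, 0 <= lam i)
  (hdelta : forall i, 0 < delta i)
  (hB : forall i j, 0 <= B i j)
  (hBdiag : forall i, B i i = 0)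
  (hweak : weakly_connected B)
  (hnstrong : ~ strongly_connected B)
  (hSpos : forall s, S s -> forall i, 0 <= s i)
  (hSconv : convex_setS S)
  (hq : forall i, good_q (q i))
  (hpbar_pos : forall eps s, 0 < eps -> S s -> vpos (pbar eps s))
  (hpbar_sol : forall eps s, 0 < eps -> S s ->
      solves_eq lam delta B q eps s (pbar eps s))
  (hpbar_uniq : forall eps s p, 0 < eps -> S s -> vpos p ->
      solves_eq lam delta B q eps s p -> p = pbar eps s) :
  forall s, S s -> forall eps1 eps2 : R, 0 < eps1 -> eps1 <= eps2 ->
    forall i, pbar eps1 s i <= pbar eps2 s i.
Proof.
move=> s Ss e1 e2 e1_gt0 le_e; have e2_gt0 := lt_le_trans e1_gt0 le_e.
apply: (balanced_monotone hB (a1 := fun i => lam i + e1)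
          (a2 := fun i => lam i + e2)
          (c := fun i => (q i (s i))^-1 * delta i)).
- by move=> i; rewrite addr_ge0 // ltW.
- by move=> i; rewrite lerD2l.
- by move=> i; rewrite ltr_wpDl.
- move=> i; rewrite mulr_gt0 // invr_gt0.
  by case: (hq i) => q_range _ _ _; case: (q_range _ (hSpos _ Ss i)).
- exact: hpbar_pos.
- exact: hpbar_pos.
- exact/solves_eq_balanced/hpbar_sol.
- exact/solves_eq_balanced/hpbar_sol.
Qed.
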